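(* Let $p$ be a prime and let $A$ be a nontrivial finite $p$-group. Define $A_0=A$ and $A_n=A_{n-1}\wr \mathbb{Z}/p\mathbb{Z}$ for $n\ge1$. Then for every integer $k$, $\lim_{n\to\infty} r_{A_n,k}=1$.
   Context: For a finite $p$-group $G$ with $|G|=p^g$ and maximum element order $p^{f}$, and for $k\in\mathbb{Z}$, define $r_{G,k}=\frac{1}{p^g}\cdot\#\{x\in G:\ \mathrm{order}(x)\le p^{f-k}\}$. For groups $A,B$, let $K=\prod_{b\in B}A$, on which $B$ acts by $x\cdot(\alpha_b)_b=(\alpha_{x^{-1}b})_b$ for $x\in B$; the wreath product $A\wr B$ is the semidirect product $K\rtimes B$ for this action. *)

From HB Require Import structures.
From mathcomp Require Import all_boot all_order all_algebra all_fingroup all_solvable.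
From mathcomp Require Import all_classical all_reals all_analysis.
Set Implicit Arguments. Unset Strict Implicit. Unset Printing Implicit Defensive.
Import Order.TTheory GRing.Theory Num.Theory.

(* Wreath product A wr B = K x| B with K = prod_{b in B} A = {ffun B -> A},
   B acting by (x . alpha)_b = alpha_{x^-1 b}. *)
Section Wreath.
Variables (A B : finGroupType).

Definition wreath : Type := ({ffun B -> A} * B)%type.
HB.instance Definition _ := Finite.on wreath.

Local Open Scope group_scope.

Definition wact (x : B) (f : {ffun B -> A}) : {ffun B -> A} :=
  [ffun b => f (x^-1 * b)].

Definition wmul (u v : wreath) : wreath :=
  ([ffun b => u.1 b * wact u.2 v.1 b], u.2 * v.2).
Definition wone : wreath := ([ffun => 1], 1).
Definition winv (u : wreath) : wreath :=
  ([ffun b => (u.1 (u.2 * b))^-1], u.2^-1).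

Lemma wmulA : associative wmul.
Proof.
move=> [f x] [g y] [h z]; rewrite /wmul /wact /=; congr (_, _); last first.
  by rewrite mulgA.
by apply/ffunP=> b; rewrite !ffunE invMg !mulgA.
Qed.

Lemma wmul1 : left_id wone wmul.
Proof.
move=> [f x]; rewrite /wmul /wact /=; congr (_, _); last by rewrite mul1g.
by apply/ffunP=> b; rewrite !ffunE invg1 !mul1g.
Qed.

Lemma wmulV : left_inverse wone winv wmul.
Proof.
move=> [f x]; rewrite /wmul /wact /=; congr (_, _); last by rewrite mulVg.
by apply/ffunP=> b; rewrite !ffunE invgK mulVg.
Qed.

HB.instance Definition _ := Finite_isGroup.Build wreath wmulA wmul1 wmulV.
End Wreath.

Fixpoint iter_wreath (p : nat) (A : finGroupType) (n : nat) : finGroupType :=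
  match n with
  | 0 => A
  | n'.+1 => wreath (iter_wreath p A n') ('Z_p)
  end.

Definition max_ord_exp (p : nat) (G : finGroupType) : nat :=
  logn p (\max_(x : G) #[x]%g).

Local Open Scope ring_scope.
Definition r_ (R : realType) (p : nat) (G : finGroupType) (k : int) : R :=
  #|[set x : G | (#[x]%g%:R : R) <= (p%:R : R) ^ ((max_ord_exp p G)%:Z - k)]|%:R
  / #|[set: G]|%:R.

(* Write rho_n(N) for the proportion of elements x of A_n with x ^+ N = 1.
   An element (f, x) of A wr C_p with x <> 1 has (f, x) ^+ p in the base group,
   with coordinates the conjugates of the product of f along the single orbit
   of x; so (f, x) ^+ (p * N) = 1 iff that orbit product has N-th power 1, and
   the orbit product is uniformly distributed as f varies.  Hence
     rho_(n+1)(p N) = rho_n(p N) ^ p / p + (1 - 1/p) rho_n(N).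
   Since exp A_n = p ^ (f_0 + n), r_(A_n, j) = rho_n(p ^ (f_0 + n - j)) for
   n >= j, and the recursion makes r_(A_(n+1), j+1) a convex combination of
   r_(A_n, j) ^ p (weight 1/p) and r_(A_n, j+1); induction on j then gives
   the limit 1.  For k < 0 every element qualifies and r_(A_n, k) = 1. *)

From HB Require Import structures.
From mathcomp Require Import all_boot all_order all_algebra all_fingroup all_solvable.
From mathcomp Require Import all_classical all_reals all_analysis.
From mathcomp Require Import ring lra.
Import numFieldNormedType.Exports.
Import Order.TTheory GRing.Theory Num.Theory.

Set Implicit Arguments.
Unset Strict Implicit.

Local Open Scope group_scope.

Definition root1_set (gT : finGroupType) (N : nat) := [set x : gT | x ^+ N == 1].

Definition root1_frac (R : numFieldType) (gT : finGroupType) (N : nat) : R :=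
  (#|root1_set gT N|%:R / #|[set: gT]|%:R)%R.

Lemma card_ffun_at {aT rT : finType} (a0 : aT) (S : {pred rT}) :
  #|[set g : {ffun aT -> rT} | g a0 \in S]| = (#|S| * #|rT| ^ #|aT|.-1)%N.
Proof.
pose F b := if b == a0 then S else predT.
rewrite (@eq_card _ _ (family F)); last first.
  move=> g; rewrite inE; apply/idP/familyP => [Sg b|/(_ a0)].
    by rewrite /F; case: eqP => [->|].
  by rewrite /F eqxx.
rewrite card_family foldrE big_map big_enum /= (bigD1 a0) //= /F eqxx.
rewrite (eq_bigr (fun _ => #|rT|)) ?prod_nat_const ?cardC1 // => b /negbTE b_a0.
by rewrite /F b_a0.
Qed.

Lemma root1_frac_in01 (R : numFieldType) (gT : finGroupType) N :
  (0 <= root1_frac R gT N <= 1)%R.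
Proof.
rewrite /root1_frac divr_ge0 //= ler_pdivrMr ?ltr0n ?cardG_gt0 // mul1r ler_nat.
exact: subset_leq_card (finset.subsetT _).
Qed.

Lemma root1_frac_exponent (R : numFieldType) (gT : finGroupType) :
  root1_frac R gT (exponent [set: gT]) = 1%R.
Proof.
rewrite /root1_frac (_ : root1_set _ _ = [set: gT]).
  by rewrite divff // pnatr_eq0 -lt0n cardG_gt0.
by apply/setP => x; rewrite !inE expg_exponent ?inE ?eqxx.
Qed.

Section Wreath.
Variables (A B : finGroupType).
Implicit Types (u : wreath A B).

Lemma card_wreath : #|[set: wreath A B]| = (#|A| ^ #|B| * #|B|)%N.
Proof. by rewrite cardsT card_prod card_ffun. Qed.

Lemma card_wreath_pred (P : pred (wreath A B)) :
  #|[set u | P u]| = \sum_(x : B) #|[set f : {ffun B -> A} | P (f, x)]|.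
Proof.
under eq_bigr do rewrite -sum1dep_card.
rewrite -sum1dep_card (exchange_big_dep xpredT) //= pair_big_dep /=.
by apply: eq_bigl => -[f x].
Qed.

Lemma wreath_expg_top u m : (u ^+ m).2 = u.2 ^+ m.
Proof. by elim: m => // m IH; rewrite !expgS /= IH. Qed.

Lemma wreath_expg_base u m b : (u ^+ m).1 b = \prod_(i < m) u.1 (u.2 ^- i * b).
Proof.
elim: m b => [|m IH] b; first by rewrite big_ord0 /= ffunE.
rewrite expgS /= !ffunE IH big_ord_recl /= expg0 invg1 mul1g.
by congr (_ * _); apply: eq_bigr => i _; rewrite mulgA -invMg -expgS.
Qed.

Lemma wreath_eq1 u : (u == 1) = [forall b, u.1 b == 1] && (u.2 == 1).
Proof.
case: u => f x; rewrite xpair_eqE; congr (_ && _).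
apply/eqP/forallP => [-> b|f1]; first by rewrite ffunE.
by apply/ffunP => b; rewrite ffunE; apply/eqP.
Qed.

Lemma wreath_expg_eq1_base u m :
  u.2 = 1 -> (u ^+ m == 1) = [forall b, u.1 b ^+ m == 1].
Proof.
move=> u2; rewrite wreath_eq1 wreath_expg_top u2 expg1n eqxx andbT.
apply: eq_forallb => b; rewrite wreath_expg_base.
under eq_bigr do rewrite u2 expg1n invg1 mul1g.
by rewrite big_const_ord [_ ^+ m]Monoid.iteropE.
Qed.

End Wreath.

Section WreathPrimeTop.
Variables (A B : finGroupType).
Hypothesis prime_B : prime #|B|.
Local Notation q := #|B|.
Implicit Types (f : {ffun B -> A}) (x b : B) (u : wreath A B).

Lemma expg_card_top x : x ^+ q = 1.
Proof. by rewrite -cardsT expg_cardG ?inE. Qed.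

Lemma order_top x : x != 1 -> #[x] = q.
Proof.
move=> x1; have /primeP[_ dvd_q] := prime_B.
have /dvd_q/orP[] : (#[x] %| q)%N by rewrite -cardsT order_dvdG ?inE.
  by rewrite order_eq1 (negbTE x1).
by move/eqP.
Qed.

Lemma expg_top_neq1 x i : x != 1 -> (0 < i < q)%N -> x ^+ i != 1.
Proof.
move=> x1 /andP[i_gt0 lt_i_q]; rewrite -order_dvdn order_top //.
by apply/negP => /(dvdn_leq i_gt0); rewrite leqNgt lt_i_q.
Qed.

Lemma cycle_top x : x != 1 -> <[x]> = [set: B].
Proof.
move=> x1; apply/eqP.
by rewrite eqEcard finset.subsetT cardsT -(order_top x1) leqnn.
Qed.

(* The b-coordinate of (f, x) ^+ #|B|, by wreath_expg_base. *)
Definition orbit_prod f x b := \prod_(i < q) f (x ^- i * b).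

Lemma orbit_prod_recl f x b :
  orbit_prod f x b = f b * \prod_(i < q.-1) f (x ^- i.+1 * b).
Proof.
rewrite /orbit_prod; case: #|B| (prime_gt0 prime_B) => // n _.
by rewrite big_ord_recl expg0 invg1 mul1g.
Qed.

Lemma orbit_prodJ f x b : orbit_prod f x (x^-1 * b) = orbit_prod f x b ^ f b.
Proof.
have xqb : x ^- q * b = b by rewrite expg_card_top invg1 mul1g.
rewrite [orbit_prod f x b]orbit_prod_recl conjgE mulgA mulKg /orbit_prod.
under eq_bigr do rewrite mulgA -invMg -expgS.
move: xqb; case: #|B| (prime_gt0 prime_B) => // n _ xqb.
by rewrite big_ord_recr /= xqb.
Qed.

Lemma orbit_prod_expg_eq1 f x N : x != 1 ->
  [forall b, orbit_prod f x b ^+ N == 1] = (orbit_prod f x 1 ^+ N == 1).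
Proof.
move=> x1; apply/forallP/idP => [/(_ 1)//|P1 b].
have /cycleP[j ->] : b \in <[x^-1]> by rewrite cycle_top ?inE ?invg_eq1.
elim: j => [|j IH]; first by rewrite expg0.
by rewrite expgS orbit_prodJ -conjXg (eqP IH) conj1g.
Qed.

Lemma wreath_expgM_eq1 u N : u.2 != 1 ->
  (u ^+ (q * N) == 1) = (orbit_prod u.1 u.2 1 ^+ N == 1).
Proof.
move=> u2; rewrite expgM wreath_expg_eq1_base ?wreath_expg_top ?expg_card_top //.
rewrite -(orbit_prod_expg_eq1 _ _ u2); apply: eq_forallb => b.
by rewrite wreath_expg_base.
Qed.

Lemma card_orbit_prod_in x (S : {set A}) : x != 1 ->
  #|[set f | orbit_prod f x 1 \in S]| = (#|S| * #|A| ^ q.-1)%N.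
Proof.
(* Replacing f 1 by orbit_prod f x 1 = f 1 * (a product avoiding f 1) is a
   bijection. *)
move=> x1; pose phi f := [ffun b => if b == 1 then orbit_prod f x 1 else f b].
have phi_inj : injective phi.
  move=> f g /ffunP phi_fg; have fg b : b != 1 -> f b = g b.
    by move=> b1; have := phi_fg b; rewrite !ffunE (negbTE b1).
  apply/ffunP => b; have [->|/fg//] := eqVneq b 1.
  have := phi_fg 1; rewrite !ffunE eqxx !orbit_prod_recl.
  rewrite (eq_bigr (fun i : 'I_q.-1 => g (x ^- i.+1 * 1))) => [/mulIg//|i _].
  by apply: fg; rewrite mulg1 invg_eq1 expg_top_neq1 //= -ltn_predRL.
rewrite -(card_ffun_at (1 : B)) -[RHS](card_preimset _ phi_inj).
apply: eq_card => f.
by rewrite !inE ffunE eqxx.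
Qed.

Lemma card_wreath_root1 N :
  #|root1_set (wreath A B) (q * N)| =
  (#|root1_set A (q * N)| ^ q + q.-1 * (#|root1_set A N| * #|A| ^ q.-1))%N.
Proof.
rewrite {1}/root1_set card_wreath_pred (bigD1 1) //=; congr (_ + _)%N.
  rewrite -card_ffun_on; apply: eq_card => f; rewrite inE wreath_expg_eq1_base //.
  by apply/forallP/ffun_onP => f1 b; have := f1 b; rewrite inE.
rewrite (eq_bigr (fun _ => #|root1_set A N| * #|A| ^ q.-1)%N).
  by rewrite sum_nat_const cardC1.
move=> x x1; rewrite -(card_orbit_prod_in _ x1); apply: eq_card => f.
by rewrite !inE wreath_expgM_eq1.
Qed.

Lemma root1_frac_wreath (R : numFieldType) N :
  root1_frac R (wreath A B) (q * N) =
  (q%:R^-1 * root1_frac R A (q * N) ^+ q + (1 - q%:R^-1) * root1_frac R A N)%R.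
Proof.
rewrite /root1_frac card_wreath_root1 card_wreath.
move: (cardG_gt0 [set: A]) (prime_gt0 prime_B); rewrite !cardsT.
case: #|A| => // g _; case: #|B| => // n _.
rewrite !natrD !natrM !natrX expr_div_n !exprS -[(n.+1%:R)%R]natr1 /=; field.
by rewrite addrC !natr1 !pnatr_eq0 expf_neq0 ?pnatr_eq0.
Qed.

Lemma exponent_wreath (a : A) : #[a] = exponent [set: A] ->
  exponent [set: wreath A B] = (q * exponent [set: A])%N.
Proof.
move=> oa; apply/eqP; rewrite eqn_dvd; apply/andP; split.
  apply/exponentP => u _; have [u2|u2] := eqVneq u.2 1.
    apply/eqP; rewrite wreath_expg_eq1_base //; apply/forallP => b.
    by rewrite mulnC expgM expg_exponent ?inE // expg1n.
  by apply/eqP; rewrite wreath_expgM_eq1 // expg_exponent ?inE.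
have [x _ x1] : exists2 x, x \in [set: B] & x != 1.
  by apply/trivgPn; rewrite -cardG_gt1 cardsT prime_gt1.
pose u : wreath A B := ([ffun b => if b == 1 then a else 1], x).
have orbit_u : orbit_prod u.1 x 1 = a.
  rewrite orbit_prod_recl ffunE eqxx big1 ?mulg1 // => i _.
  by rewrite ffunE mulg1 invg_eq1 (negbTE (expg_top_neq1 x1 _)) //= -ltn_predRL.
have /dvdnP[m om] : (q %| #[u])%N.
  by rewrite -(order_top x1) order_dvdn -[x]/(u.2) -wreath_expg_top expg_order.
have u_exp : (#[u] %| exponent [set: wreath A B])%N by rewrite dvdn_exponent ?inE.
apply: (@dvdn_trans #[u] _ _ _ u_exp).
rewrite om [(m * _)%N]mulnC dvdn_pmul2l ?prime_gt0 // -oa order_dvdn -orbit_u.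
by rewrite -wreath_expgM_eq1 // mulnC -om expg_order.
Qed.

End WreathPrimeTop.

Section PGroup.
Variables (p : nat) (gT : finGroupType).
Hypotheses (prime_p : prime p) (pgroup_gT : p.-group [set: gT]).

Lemma bigmax_order : (\max_(x : gT) #[x])%N = exponent [set: gT].
Proof.
apply/eqP; rewrite eqn_leq; apply/andP; split.
  apply/bigmax_leqP => x _.
  by apply: dvdn_leq (exponent_gt0 _) (dvdn_exponent _); rewrite inE.
have [a _ ->] := exponent_witness (pgroup_nil pgroup_gT).
exact: leq_bigmax.
Qed.

Lemma max_ord_expE : max_ord_exp p gT = logn p (exponent [set: gT]).
Proof. by rewrite /max_ord_exp bigmax_order. Qed.

Lemma exponent_pgroupT : exponent [set: gT] = (p ^ max_ord_exp p gT)%N.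
Proof.
rewrite max_ord_expE -p_part part_pnat_id //.
exact: pnat_dvd (exponent_dvdn _) pgroup_gT.
Qed.

Lemma order_leq_pexp (x : gT) m : (#[x] <= p ^ m)%N = (x ^+ (p ^ m) == 1).
Proof.
have px : p.-elt x by apply: mem_p_elt pgroup_gT _; rewrite inE.
rewrite -order_dvdn -(part_pnat_id px) p_part dvdn_Pexp2l ?prime_gt1 //.
by rewrite leq_exp2l ?prime_gt1.
Qed.

Local Open Scope ring_scope.

Lemma r_Posz (R : realType) j : (j <= max_ord_exp p gT)%N ->
  r_ R p gT j = root1_frac R gT (p ^ (max_ord_exp p gT - j)).
Proof.
move=> le_j; rewrite /r_ /root1_frac; congr (_%:R / _); apply: eq_card => x.
by rewrite !inE subzn // -exprnP -natrX ler_nat order_leq_pexp.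
Qed.

Lemma r_Negz (R : realType) m : r_ R p gT (Negz m) = 1.
Proof.
rewrite /r_ (_ : [set x | _] = [set: gT]) ?divff ?pnatr_eq0 -?lt0n ?cardG_gt0 //.
apply/setP => x; rewrite !inE NegzE opprK -PoszD -exprnP -natrX ler_nat.
rewrite order_leq_pexp expnD expgM -exponent_pgroupT.
by rewrite expg_exponent ?inE ?expg1n ?eqxx.
Qed.

End PGroup.

Section ConvexRecursion.
Variable R : realType.
Local Open Scope ring_scope.
Local Open Scope classical_set_scope.

Lemma geometric_bound (d : nat -> R) (c e : R) (M : nat) :
  0 <= c -> d M <= e + 1 ->
  (forall n, (M <= n)%N -> d n.+1 <= (1 - c) * e + c * d n) ->
  forall k, d (M + k)%N <= e + c ^+ k.
Proof.
move=> c_ge0 dM d_rec; elim=> [|k IH]; first by rewrite addn0 expr0.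
rewrite addnS (le_trans (d_rec _ (leq_addr _ _))) // exprS.
have -> : e + c * c ^+ k = (1 - c) * e + c * (e + c ^+ k) by ring.
by rewrite lerD2l ler_wpM2l.
Qed.

Lemma convex_recursion_cvg1 (u w : nat -> R) (a : R) (M : nat) :
  0 < a <= 1 -> (forall n, 0 <= u n <= 1) -> w @ \oo --> (1 : R) ->
  (forall n, (M <= n)%N -> u n.+1 = a * w n + (1 - a) * u n) ->
  u @ \oo --> (1 : R).
Proof.
move=> /andP[a_gt0 a_le1] u01 w1 u_rec; apply/cvgrPdist_le => e e_gt0.
have e2_gt0 : 0 < e / 2 by rewrite divr_gt0.
have [N _ w_near] := (cvgrPdist_le _ _).1 w1 _ e2_gt0.
have c_ge0 : 0 <= 1 - a by rewrite subr_ge0.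
have c_lt1 : `|1 - a| < 1 by rewrite ger0_norm // ltrBlDr ltrDl.
have [K _ c_small] := (cvgrPdist_le _ _).1 (cvg_expr c_lt1) _ e2_gt0.
pose M' := maxn M N.
have bound := @geometric_bound (fun n => `|1 - u n|) _ (e / 2) M' c_ge0.
have {}bound k : `|1 - u (M' + k)%N| <= e / 2 + (1 - a) ^+ k.
  apply: bound => [|n le_n].
    have /andP[u_ge0 u_le1] := u01 M'.
    by rewrite ger0_norm ?subr_ge0 //; lra.
  have [le_Mn le_Nn] : (M <= n)%N /\ (N <= n)%N.
    by split; apply: leq_trans le_n; rewrite ?leq_maxl ?leq_maxr.
  rewrite u_rec // subKr.
  have -> : 1 - (a * w n + (1 - a) * u n) =
            a * (1 - w n) + (1 - a) * (1 - u n) by ring.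
  rewrite (le_trans (ler_normD _ _)) // !normrM.
  rewrite (gtr0_norm a_gt0) (ger0_norm c_ge0).
  by rewrite lerD2r ler_wpM2l ?(ltW a_gt0) ?w_near.
exists (M' + K)%N => // n /= le_n.
have le_M'n : (M' <= n)%N := leq_trans (leq_addr K M') le_n.
have le_K : (K <= n - M')%N by rewrite leq_subRL // addnC.
have := c_small _ le_K; rewrite /= sub0r normrN ger0_norm ?exprn_ge0 // => small.
rewrite -(subnKC le_M'n) (le_trans (bound _)) //; lra.
Qed.

End ConvexRecursion.

Section IteratedWreath.
Variables (p : nat) (A : finGroupType).
Hypotheses (prime_p : prime p) (pgroup_A : p.-group [set: A]).
Local Notation G n := (iter_wreath p A n).

Let card_Z : #|'Z_p| = p.
Proof. by rewrite card_ord Zp_cast ?prime_gt1. Qed.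

Let prime_Z : prime #|'Z_p|.
Proof. by rewrite card_Z. Qed.

Lemma pgroup_iter_wreath n : p.-group [set: G n].
Proof.
elim: n => [|n IH] //=.
rewrite /pgroup card_wreath card_Z pnatM pnatX pnat_id // andbT.
by move: IH; rewrite /pgroup cardsT => ->.
Qed.

Lemma max_ord_exp_iter_wreath n : max_ord_exp p (G n) = (max_ord_exp p A + n)%N.
Proof.
elim: n => [|n IH]; first by rewrite addn0.
have [a _ oa] := exponent_witness (pgroup_nil (pgroup_iter_wreath n)).
rewrite addnS -IH max_ord_expE ?pgroup_iter_wreath //=.
rewrite (exponent_wreath prime_Z (esym oa)).
by rewrite card_Z (exponent_pgroupT (pgroup_iter_wreath n)) -expnS pfactorK.
Qed.

Variable R : realType.
Local Open Scope ring_scope.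
Local Open Scope classical_set_scope.

Lemma root1_frac_iter_wreathS n N :
  root1_frac R (G n.+1) (p * N) =
  p%:R^-1 * root1_frac R (G n) (p * N) ^+ p +
  (1 - p%:R^-1) * root1_frac R (G n) N.
Proof. by have := root1_frac_wreath (G n) prime_Z R N; rewrite card_Z. Qed.

Local Notation rho j n := (root1_frac R (G n) (p ^ (max_ord_exp p A + n - j))).

Lemma root1_frac_iter_wreath_cvg1 j : (fun n => rho j n) @ \oo --> (1 : R).
Proof.
elim: j => [|j IH].
  suff -> : (fun n => rho 0 n) = fun=> 1 by exact: cvg_cst.
  apply/funext => n; rewrite subn0 -max_ord_exp_iter_wreath.
  by rewrite -(exponent_pgroupT (pgroup_iter_wreath n)) root1_frac_exponent.
apply: (@convex_recursion_cvg1 _ _ (fun n => rho j n ^+ p) p%:R^-1 j.+1).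
- by rewrite invr_gt0 ltr0n prime_gt0 //= invf_le1 ?ler1n ?ltr0n ?prime_gt0.
- by move=> n; exact: root1_frac_in01.
- rewrite -(expr1n R p).
  exact: (continuous_cvg _ (@exprn_continuous R p 1) IH).
move=> n lt_jn; have lt_j : (j < max_ord_exp p A + n)%N by rewrite ltn_addl.
by rewrite addnS subSS -(subnSK lt_j) expnS root1_frac_iter_wreathS.
Qed.

End IteratedWreath.

Unset Implicit Arguments.
Local Open Scope ring_scope.
Local Open Scope classical_set_scope.

Theorem lemma3 (R : realType) (p : nat) (A : finGroupType) (k : int) :
  prime p -> (p.-group (finset.setT : {set A}))%g -> (finset.setT : {set A}) != 1%g ->
  (fun n : nat => r_ R p (iter_wreath p A n) k) @ \oo --> (1 : R).
Proof.
move=> prime_p pgroup_A _.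
have pgroupG := pgroup_iter_wreath prime_p pgroup_A.
case: k => [j|m]; last first.
  suff -> : (fun n => r_ R p (iter_wreath p A n) (Negz m)) = fun=> 1.
    exact: cvg_cst.
  by apply/funext => n; rewrite (r_Negz prime_p (pgroupG n)).
apply: (cvg_trans _ (root1_frac_iter_wreath_cvg1 prime_p pgroup_A j)).
apply: near_eq_cvg; exists j => // n /= le_jn.
rewrite (r_Posz prime_p (pgroupG n)) max_ord_exp_iter_wreath //.
by rewrite (leq_trans le_jn) ?leq_addl.
Qed.
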